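(* Let $\mathcal{F}$ be a finite forest and let $\vec\lambda:V(\mathcal{F})\to\mathbb{Z}_{\ge 0}$ be any labelling of its vertices. Then the bounded degree complex $\mathrm{BD}^{\vec\lambda}(\mathcal{F})$ is vertex decomposable.
   Context: For a finite simple graph $G$ and $\vec\lambda:V(G)\to\mathbb{Z}_{\ge0}$, the bounded degree complex $\mathrm{BD}^{\vec\lambda}(G)$ is the simplicial complex whose simplices are the subsets $\sigma\subseteq E(G)$ such that for every vertex $v\in V(G)$ the number of edges of $\sigma$ incident to $v$ is at most $\vec\lambda(v)$. For a simplicial complex $K$ and a vertex $v$, $\mathrm{lk}(v,K)=\{\tau\in K: v\notin\tau,\ \tau\cup\{v\}\in K\}$ and $\mathrm{del}(v,K)=\{\tau\in K: v\notin\tau\}$. A simplicial complex $K$ is vertex decomposable if $K$ is a simplex (the set of all subsets of a finite set, including $\{\emptyset\}$), or $K$ contains a vertex $v$ such that (i) both $\mathrm{lk}(v,K)$ and $\mathrm{del}(v,K)$ are vertex decomposable, and (ii) every facet (maximal simplex) of $\mathrm{del}(v,K)$ is a facet of $K$. *)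

From mathcomp Require Import all_boot.
Set Implicit Arguments. Unset Strict Implicit. Unset Printing Implicit Defensive.

(* A finite simple graph is given by a vertex type V : finType and an
   adjacency relation e : rel V which is symmetric and irreflexive. *)

Section Complexes.
Variable T : finType.
Implicit Types (K : {set {set T}}) (v : T) (A F : {set T}).

Definition lk v K : {set {set T}} :=
  [set tau in K | (v \notin tau) && (v |: tau \in K)].
Definition del v K : {set {set T}} := [set tau in K | v \notin tau].

Definition is_facet K F : Prop :=
  F \in K /\ forall G, G \in K -> F \subset G -> G = F.

Inductive vertex_decomposable : {set {set T}} -> Prop :=
| vd_simplex (A : {set T}) : vertex_decomposable (powerset A)
| vd_shed K v :
    [set v] \in K ->
    vertex_decomposable (lk v K) ->
    vertex_decomposable (del v K) ->
    (forall F, is_facet (del v K) F -> is_facet K F) ->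
    vertex_decomposable K.
End Complexes.

Section Graphs.
Variable V : finType.
Variable e : rel V.

Definition edges : {set {set V}} :=
  [set s : {set V} | [exists u, exists w, e u w && (s == [set u; w])]].

Definition BD (lam : V -> nat) : {set {set {set V}}} :=
  [set sigma : {set {set V}} | (sigma \subset edges) &&
     [forall v, #|[set s in sigma | v \in s]| <= lam v]].

Definition forest : Prop :=
  forall c : seq V, uniq c -> 2 < size c -> ~~ cycle e c.
End Graphs.

From mathcomp Require Import all_boot zify.
Set Implicit Arguments. Unset Strict Implicit. Unset Printing Implicit Defensive.

(* We generalise from BD e lam to the complex bdc E lam of degree-bounded
   subsets of an arbitrary set E of edges of the forest, and argue by
   induction on #|E|.  If some edge f is not even a face, it can be deleted
   from E.  Otherwise every endpoint has a positive bound, and we look at the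
   end x0 x1 x2 ... of a longest path: x0 is a leaf at u = x1 and all
   neighbours of u except x2 are leaves.  If the bound at u is not binding,
   the edge {u, x0} lies in every facet and the complex is a cone over
   bdc (E :\ {u, x0}) lam; coning preserves vertex decomposability.  If it
   is binding, {u, x2} is a shedding vertex: its link and deletion are again
   bounded degree complexes on E :\ {u, x2}, and a facet of the deletion
   that could be extended by {u, x2} could also be extended by a pendant
   edge at u. *)

Section Cone.
Variable T : finType.
Implicit Types (K L : {set {set T}}) (f v : T) (F G : {set T}).

(* The cone over K with apex f: a set is a face iff removing f gives a face
   of K.  When no face of K contains f, this is the join of K with the
   vertex f. *)
Definition cone f K : {set {set T}} := [set r | r :\ f \in K].

Lemma in_cone f K r : (r \in cone f K) = (r :\ f \in K).
Proof. by rewrite inE. Qed.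

Lemma facet_cone f L F :
  (forall t, t \in L -> f \notin t) ->
  is_facet (cone f L) F <-> f \in F /\ is_facet L (F :\ f).
Proof.
move=> Lf; have apexK t : t \in L -> (f |: t) :\ f = t.
  move=> tL; rewrite setDUl setDv set0U; apply/setDidPl.
  by rewrite disjoint_sym disjoints1 Lf.
split.
- case=> FL Fmax; rewrite in_cone in FL.
  have fF : f \in F.
    suff <- : f |: F = F by rewrite setU11.
    by apply: Fmax; rewrite ?subsetUr // in_cone setDUl setDv set0U.
  split=> //; split=> // G GL FG.
  have <- : f |: G = F.
    apply: Fmax; first by rewrite in_cone apexK.
    by rewrite -{1}(setD1K fF) setUS.
  by rewrite apexK.
- case=> fF [FL Fmax]; split; first by rewrite in_cone.
  move=> G; rewrite in_cone => GL FG.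
  have fG : f \in G by apply: (subsetP FG).
  by rewrite -(setD1K fG) -(setD1K fF) (Fmax _ GL (setSD _ FG)).
Qed.

Lemma lk_cone f v K : v != f -> lk v (cone f K) = cone f (lk v K).
Proof.
move=> vf; apply/setP=> r; rewrite !inE vf /=.
suff -> : (v |: r) :\ f = v |: (r :\ f) by [].
by apply/setP=> x; rewrite !inE; case: (eqVneq x v) => [->|]; rewrite ?vf.
Qed.

Lemma del_cone f v K : v != f -> del v (cone f K) = cone f (del v K).
Proof. by move=> vf; apply/setP=> r; rewrite !inE vf andbC. Qed.

(* Coning preserves vertex decomposability: shed the same vertices as in K. *)
Lemma cone_vd K f :
  vertex_decomposable K -> (forall t, t \in K -> f \notin t) ->
  vertex_decomposable (cone f K).
Proof.
move=> vdK; elim: vdK f => {K} [A|K v vK _ IHlk _ IHdel facets] f Kf.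
- have fA : f \notin A by apply: Kf; rewrite powersetE.
  have -> : cone f (powerset A) = powerset (f |: A).
    by apply/setP=> r; rewrite in_cone !powersetE subDset.
  exact: vd_simplex.
- have vf : v != f by apply: contraNneq (Kf _ vK) => <-; rewrite set11.
  have delKf t : t \in del v K -> f \notin t by rewrite inE => /andP[/Kf].
  apply: (@vd_shed _ _ v).
  + by rewrite in_cone (setDidPl _) // disjoint_sym disjoints1 inE eq_sym.
  + by rewrite lk_cone //; apply: IHlk => t; rewrite inE => /and3P[/Kf].
  + by rewrite del_cone //; exact: IHdel.
  + move=> F; rewrite del_cone // => /(facet_cone _ delKf) [fF /facets Fc].
    exact/(facet_cone _ Kf).
Qed.

End Cone.

Section BoundedDegree.
Variable V : finType.
Implicit Types (E sigma tau F : {set {set V}}) (f g h : {set V}) (v : V)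
               (lam : V -> nat).

Definition deg sigma v := #|[set s in sigma | v \in s]|.

(* The bounded degree complex on an arbitrary edge set E; BD e lam is the
   case E = edges e. *)
Definition bdc E lam : {set {set {set V}}} :=
  [set sigma : {set {set V}} | (sigma \subset E) && [forall v, deg sigma v <= lam v]].

Lemma in_bdc E lam sigma :
  (sigma \in bdc E lam) = (sigma \subset E) && [forall v, deg sigma v <= lam v].
Proof. by rewrite inE. Qed.

Lemma deg_sub tau sigma v : tau \subset sigma -> deg tau v <= deg sigma v.
Proof.
move=> ts; apply/subset_leq_card/subsetP=> x; rewrite !inE => /andP[xt ->].
by rewrite (subsetP ts).
Qed.

Lemma degU1 sigma f v : f \notin sigma -> deg (f |: sigma) v = deg sigma v + (v \in f).
Proof.
move=> fs; rewrite /deg; case: (boolP (v \in f)) => vf.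
- have -> : [set x in f |: sigma | v \in x] = f |: [set x in sigma | v \in x].
    by apply/setP=> x; rewrite !inE; case: eqP => [->|]; rewrite ?vf.
  by rewrite cardsU1 inE (negPf fs) addnC.
- rewrite addn0; apply: eq_card => x; rewrite !inE.
  by case: eqP => [->|]; rewrite ?(negPf vf) ?andbF.
Qed.

Lemma deg_pendant E f v :
  (forall h, h \in E -> v \in h -> h = f) -> deg E v <= 1.
Proof.
move=> onlyf; rewrite -(cards1 f); apply/subset_leq_card/subsetP=> h.
by rewrite !inE => /andP[hE vh]; rewrite (onlyf h hE vh).
Qed.

Lemma bdc_down E lam sigma tau :
  sigma \in bdc E lam -> tau \subset sigma -> tau \in bdc E lam.
Proof.
rewrite !in_bdc => /andP[sE /forallP sdeg] ts; rewrite (subset_trans ts sE).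
by apply/forallP=> v; apply: leq_trans (deg_sub v ts) (sdeg v).
Qed.

Lemma bdc0 lam : bdc set0 lam = powerset set0.
Proof.
apply/setP=> sigma; rewrite in_bdc powersetE subset0.
case: eqP => [->|] //=; apply/forallP=> v.
by rewrite /deg (_ : [set x in set0 | _] = set0) ?cards0 //; apply/setP=> x; rewrite !inE.
Qed.

Lemma bdc_set1 E lam f v : [set f] \in bdc E lam -> v \in f -> 0 < lam v.
Proof.
rewrite in_bdc => /andP[_ /forallP/(_ v)] bound vf.
by apply: leq_trans bound; rewrite -[[set f]]setU0 degU1 ?inE // vf addn1.
Qed.

Lemma del_bdc E lam g : del g (bdc E lam) = bdc (E :\ g) lam.
Proof.
apply/setP=> sigma; rewrite inE !in_bdc subsetD1.
by case: (g \in sigma); rewrite ?andbF ?andbT.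
Qed.

Lemma lk_bdc E lam g :
  g \in E -> (forall v, v \in g -> 0 < lam v) ->
  lk g (bdc E lam) = bdc (E :\ g) (fun v => lam v - (v \in g)).
Proof.
move=> gE lpos; apply/setP=> sigma; rewrite inE !in_bdc subsetD1 subUset sub1set gE /=.
case gs: (g \in sigma); rewrite ?andbF //= andbT.
case sE: (sigma \subset E) => //=.
apply/andP/forallP => [[_ /forallP bound] v | bound].
  by move: (bound v); rewrite degU1 ?gs //; lia.
have {}bound v : deg sigma v + (v \in g) <= lam v.
  by move: (bound v) (lpos v); case: (v \in g) => /=; lia.
split; apply/forallP=> v; last by rewrite degU1 ?gs.
exact: leq_trans (leq_addr _ _) (bound v).
Qed.

Lemma bdc_drop E lam f :
  [set f] \notin bdc E lam -> bdc E lam = bdc (E :\ f) lam.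
Proof.
move=> fn; apply/setP=> sigma; rewrite !in_bdc subsetD1.
case fs: (f \in sigma); last by rewrite andbT.
rewrite andbF; apply/negbTE; apply: contra fn => sC.
by apply: (bdc_down (sigma := sigma)); rewrite ?in_bdc ?sub1set.
Qed.

Lemma bdc_cone E lam f :
  f \in E -> (forall v, v \in f -> deg E v <= lam v) ->
  bdc E lam = cone f (bdc (E :\ f) lam).
Proof.
move=> fE slack; apply/setP=> sigma; rewrite in_cone !in_bdc subsetD1 !inE eqxx andbT.
apply/andP/andP=> [[sE /forallP bound] | [sE /forallP bound]].
  split; first exact: subset_trans (subsetDl _ _) sE.
  by apply/forallP=> v; apply: leq_trans (bound v); apply/deg_sub/subsetDl.
have {}sE : sigma \subset E.
  apply/subsetP=> x xs; case: (eqVneq x f) => [->//|xf].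
  by apply: (subsetP sE); rewrite !inE xf.
split=> //; apply/forallP=> v; case: (boolP (v \in f)) => vf.
  exact: leq_trans (deg_sub v sE) (slack v vf).
suff -> : deg sigma v = deg (sigma :\ f) v by exact: bound.
by apply: eq_card=> x; rewrite !inE; case: eqP => [->|]; rewrite ?(negPf vf) ?andbF.
Qed.

(* Shedding an edge g at a vertex u whose bound is binding, in the situation
   where every other edge h at u is pendant: each endpoint v <> u of h lies on
   no other edge.  Then a facet F of the deletion cannot be extended by g
   (u would have at most lam u - 1 edges in F, so some pendant edge at u
   could be added to F), hence F is a facet of the whole complex. *)
Lemma shed_pendant E lam g u :
  g \in E -> u \in g -> lam u < deg E u ->
  (forall h, h \in E -> u \in h -> h != g -> forall v, v \in h -> v != u ->
     0 < lam v /\ forall h', h' \in E -> v \in h' -> h' = h) ->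
  forall F, is_facet (del g (bdc E lam)) F -> is_facet (bdc E lam) F.
Proof.
move=> gE ug Hu pendant F facetF; have [FD Fmax] := facetF.
move: (FD); rewrite inE => /andP[FC gF]; split=> // G GC FG.
case gG: (g \in G); last by apply: Fmax => //; rewrite inE GC gG.
have gFC : g |: F \in bdc E lam by apply: (bdc_down GC); rewrite subUset sub1set gG.
move: FD; rewrite del_bdc => FD; exfalso.
move: (FD) gFC; rewrite !in_bdc subsetD1 => /andP[/andP[FE _] /forallP Fdeg].
move=> /andP[_ /forallP/(_ u)]; rewrite degU1 // ug addn1 => Fu.
have [h] : exists2 h, h \in [set x in E | u \in x] & h \notin g |: [set x in F | u \in x].
  apply/subsetPn/negP=> /subset_leq_card; rewrite cardsU1 inE (negPf gF).
  by rewrite -/(deg E u) -/(deg F u); lia.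
rewrite !inE negb_or => /andP[hE uh] /andP[hg]; rewrite uh andbT => hF.
have hFC : h |: F \in del g (bdc E lam).
  rewrite del_bdc in_bdc subUset sub1set !inE hg hE /= subsetD1 FE gF /=.
  apply/forallP=> v; rewrite degU1 //; case: (boolP (v \in h)) => vh; last first.
    by rewrite addn0 Fdeg.
  case: (eqVneq v u) => [->|vu]; first by rewrite addn1.
  have [lv only_h] := pendant h hE uh hg v vh vu.
  suff -> : deg F v = 0 by [].
  apply/eqP; rewrite cards_eq0; apply/eqP/setP=> x; rewrite !inE.
  apply/negP=> /andP[xF vx]; move: hF.
  by rewrite -(only_h x (subsetP FE _ xF) vx) xF.
by move: hF; rewrite -(Fmax _ hFC (subsetUr _ _)) setU11.
Qed.

End BoundedDegree.

Section LongestPath.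
Variables (V : finType) (r : rel V).
Hypotheses (r_sym : symmetric r) (r_irr : irreflexive r) (r_forest : forest r).

Definition simple_path (s : seq V) : bool :=
  uniq s && (if s is x :: p then path r x p else true).

(* In a forest the first vertex of a simple path is adjacent to no vertex of
   the path except its successor: another neighbour would close a cycle. *)
Lemma no_chord x p y :
  simple_path (x :: p) -> y \in p -> r x y -> y = head x p.
Proof.
move=> + yp; case/splitPr: yp => p1 p2 /andP[U P] xy.
case: p1 U P => [//|z p1] U P; exfalso.
have c_uniq : uniq (x :: rcons (z :: p1) y).
  by move: U; rewrite -cat_rcons -cat_cons cat_uniq => /andP[].
have c_path : cycle r (x :: rcons (z :: p1) y).
  rewrite /= rcons_path last_rcons [r y x]r_sym xy andbT.
  by move: P => /= /andP[->]; rewrite -cat_rcons cat_path => /andP[].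
by have := r_forest c_uniq; rewrite c_path /= size_rcons => /(_ isT).
Qed.

Lemma simple_pathE x p : simple_path (x :: p) = uniq (x :: p) && path r x p.
Proof. by []. Qed.

Lemma simple_path_edge a b : r a b -> simple_path [:: a; b].
Proof.
move=> ab; rewrite /simple_path /= ab !inE !andbT.
by apply: contraTneq ab => ->; rewrite r_irr.
Qed.

(* Simple paths have at most #|V| vertices, so a longest one exists as soon as
   there is an edge. *)
Lemma longest_path_exists a b : r a b ->
  exists2 s, simple_path s & forall t, simple_path t -> size t <= size s.
Proof.
move=> ab; pose has_path n := [exists t : n.-tuple V, simple_path t].
have ex2 : exists n, has_path n.
  by exists 2; apply/existsP; exists [tuple a; b]; exact: simple_path_edge.
have bounded n : has_path n -> n <= #|V|.
  by case/existsP=> t /andP[/card_uniqP tsz _]; rewrite -(size_tuple t) -tsz max_card.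
case: (ex_maxnP ex2 bounded) => n /existsP[s sp] nmax.
exists s => // t tp; rewrite size_tuple; apply: nmax.
by apply/existsP; exists (in_tuple t).
Qed.

(* Every neighbour of the first vertex of a longest path is its successor:
   a neighbour off the path would extend it, one on it would be a chord. *)
Lemma longest_path_end x p :
  simple_path (x :: p) -> (forall t, simple_path t -> size t <= size (x :: p)) ->
  forall z, r x z -> z = head x p.
Proof.
move=> sp longest z xz; case: (boolP (z \in p)) => zp; first exact: no_chord.
have zx : z != x by apply: contraTneq xz => ->; rewrite r_irr.
have : simple_path (z :: x :: p).
  case/andP: sp => U P.
  by rewrite /simple_path /= -/(uniq (x :: p)) U inE negb_or zx zp r_sym xz P.
by move/longest; rewrite /= ltnn.
Qed.

Definition leaf (y u : V) : Prop := forall z, r y z -> z = u.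

(* The end of a longest path x0 x1 x2 ... in a nonempty forest: x0 is a leaf
   at u = x1, and every neighbour of u other than q = x2 (or q = x0 if the path
   has only two vertices) is a leaf at u. *)
Lemma forest_leaf_structure a b : r a b ->
  exists u w q, [/\ r u w, leaf w u, r u q &
                    forall y, r u y -> y != q -> leaf y u].
Proof.
move=> ab; have [s sp longest] := longest_path_exists ab.
have two : 1 < size s := longest _ (simple_path_edge ab).
case: s sp longest two => [|x0 [|u p]] // sp longest _.
have x0_leaf := longest_path_end sp longest.
move: (sp); rewrite simple_pathE => /andP[U] /= /andP[x0u P].
have tail_sp : simple_path (u :: p).
  by rewrite simple_pathE P andbT; move: U; rewrite cons_uniq => /andP[].
exists u, x0, (head x0 p); split.
- by rewrite r_sym.
- exact: x0_leaf.
- by case: p {sp longest x0_leaf U tail_sp} P => [|y p] /=; [rewrite r_sym | case/andP].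
- move=> y uy yq; case: (eqVneq y x0) => [->|yx0]; first exact: x0_leaf.
  have yp : y \notin p.
    apply: contra yq => yp; have := no_chord tail_sp yp uy.
    by case: p {sp longest x0_leaf U P tail_sp} yp => //= z p _ ->.
  suff sp' : simple_path [:: y, u & p] by exact: (longest_path_end sp' longest).
  rewrite simple_pathE [path _ _ _]/= [r y u]r_sym uy P cons_uniq andbT.
  move: U; rewrite cons_uniq => /andP[_ ->]; rewrite inE negb_or yp !andbT.
  by apply: contraTneq uy => ->; rewrite r_irr.
Qed.

End LongestPath.

Section ForestEdges.
Variables (V : finType) (e : rel V).
Hypotheses (e_sym : symmetric e) (e_irr : irreflexive e) (e_forest : forest e).
Variable E : {set {set V}}.
Hypothesis E_edges : E \subset edges e.

Definition adj : rel V := fun x y => [set x; y] \in E.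

Lemma edge_at s x : s \in E -> x \in s -> exists y, s = [set x; y].
Proof.
move=> /(subsetP E_edges); rewrite inE => /existsP[a /existsP[b /andP[_ /eqP ->]]].
by rewrite !inE => /orP[] /eqP ->; [exists b | exists a; rewrite setUC].
Qed.

Lemma adj_sub_e x y : adj x y -> e x y.
Proof.
move=> /(subsetP E_edges); rewrite inE => /existsP[a /existsP[b /andP[ab /eqP xy]]].
have degenerate c : [set c; c] = [set a; b] -> false.
  move=> cab; have : (a \in [set c; c]) && (b \in [set c; c]).
    by rewrite cab !inE !eqxx orbT.
  by rewrite !inE !orbb => /andP[/eqP <- /eqP ba]; move: ab; rewrite ba e_irr.
have : (x \in [set a; b]) && (y \in [set a; b]) by rewrite -xy !inE !eqxx orbT.
rewrite !inE => /andP[/orP[] /eqP xa /orP[] /eqP yb]; subst x y.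
- by move: (degenerate _ xy).
- exact: ab.
- by rewrite e_sym.
- by move: (degenerate _ xy).
Qed.

Lemma adj_sym : symmetric adj.
Proof. by move=> x y; rewrite /adj setUC. Qed.

Lemma adj_irr : irreflexive adj.
Proof. by move=> x; apply/negbTE/negP=> /adj_sub_e; rewrite e_irr. Qed.

Lemma adj_forest : forest adj.
Proof.
move=> c cu csize; apply: contra (e_forest cu csize).
exact/sub_cycle/adj_sub_e.
Qed.

Lemma adj_exists : E != set0 -> exists a b, adj a b.
Proof.
case/set0Pn=> s sE; move: (subsetP E_edges _ sE).
rewrite inE => /existsP[a /existsP[b /andP[_ /eqP sab]]].
by exists a, b; rewrite /adj -sab.
Qed.

Lemma edge_at_leaf y u h :
  leaf adj y u -> h \in E -> y \in h -> h = [set u; y].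
Proof.
move=> yleaf hE yh; have [z hyz] := edge_at hE yh.
by rewrite hyz -(yleaf z) 1?setUC // /adj -hyz.
Qed.

End ForestEdges.

Section ForestVD.
Variables (V : finType) (e : rel V).
Hypotheses (e_sym : symmetric e) (e_irr : irreflexive e) (e_forest : forest e).

(* Unusable edges are dropped; otherwise take the leaf
   structure at the end of a longest path (leaf w at u, all other neighbours
   of u except q leaves): if the bound at u is slack, {u, w} is a cone apex,
   and otherwise {u, q} is a shedding vertex. *)
Lemma bdc_vd_step (E : {set {set V}}) lam :
  E \subset edges e -> E != set0 ->
  (forall g lam', g \in E -> vertex_decomposable (bdc (E :\ g) lam')) ->
  vertex_decomposable (bdc E lam).
Proof.
move=> E_edges E0 IH.
case: (boolP [exists f in E, [set f] \notin bdc E lam]).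
  by case/existsP=> f /andP[fE fn]; rewrite (bdc_drop fn); exact: IH.
move/existsPn=> usable.
have lpos f v : f \in E -> v \in f -> 0 < lam v.
  move=> fE; apply: (@bdc_set1 _ E).
  by move: (usable f); rewrite fE /= negbK.
have [a [b ab]] := adj_exists E_edges E0.
have [u [w [q [uw wleaf uq uleaves]]]] :=
  forest_leaf_structure (adj_sym E) (adj_irr e_sym e_irr E_edges)
                        (adj_forest e_sym e_irr e_forest E_edges) ab.
case: (leqP (deg E u) (lam u)) => Hu.
- have fE : [set u; w] \in E := uw.
  rewrite (bdc_cone fE); last first.
    move=> v; rewrite !inE => /orP[] /eqP ->; first exact: Hu.
    have wf : w \in [set u; w] by rewrite !inE eqxx orbT.
    apply: (leq_trans _ (lpos _ _ fE wf)).
    by apply: deg_pendant => h hE wh; rewrite (edge_at_leaf E_edges wleaf hE wh) setUC.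
  apply: cone_vd; first exact: IH.
  by move=> t; rewrite in_bdc subsetD1 => /andP[/andP[_ ->]].
- have gE : [set u; q] \in E := uq.
  have ug : u \in [set u; q] by rewrite setU11.
  apply: (@vd_shed _ _ [set u; q]).
  + by move: (usable [set u; q]); rewrite gE /= negbK.
  + by rewrite lk_bdc //; [exact: IH | move=> v; apply: lpos].
  + by rewrite del_bdc; exact: IH.
  + apply: (shed_pendant gE ug Hu) => h hE uh hg v vh vu.
    have [y hy] := edge_at E_edges hE uh.
    have yq : y != q by apply: contraNneq hg => yq; rewrite hy yq.
    have uy : adj E u y by rewrite /adj -hy.
    have yleaf := uleaves y uy yq.
    have vy : v = y by move: vh; rewrite hy !inE (negPf vu) => /eqP.
    split; first by apply: lpos hE vh.
    by move=> h' h'E yh'; rewrite hy (edge_at_leaf E_edges yleaf h'E) // -vy.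
Qed.

Lemma bdc_forest_vd (E : {set {set V}}) lam :
  E \subset edges e -> vertex_decomposable (bdc E lam).
Proof.
move: {2}#|E| (leqnn #|E|) => n; elim: n E lam => [|n IHn] E lam cardE E_edges.
  by move: cardE; rewrite leqn0 cards_eq0 => /eqP ->; rewrite bdc0; exact: vd_simplex.
have [->|E0] := eqVneq E set0; first by rewrite bdc0; exact: vd_simplex.
apply: bdc_vd_step => // g lam' gE; apply: IHn.
  by move: cardE; rewrite (cardsD1 g) gE.
exact: subset_trans (subsetDl _ _) E_edges.
Qed.

End ForestVD.

Unset Implicit Arguments.

Theorem theorem3p1 (V : finType) (e : rel V) :
  symmetric e -> irreflexive e -> forest e ->
  forall lam : V -> nat, vertex_decomposable (BD e lam).
Proof. by move=> e_sym e_irr e_forest lam; apply: bdc_forest_vd. Qed.
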